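(* Let $\lambda\in(1,\infty)\setminus\mathbb{N}$ and let $\phi$ be one of the functions $\phi(x)=1$, $1-x$, $1-x^2$, $(1-x^2)^2$, $(1-x^3)^3$, $(1-x^2)^3$, or $e^{-\xi x}$ with $\xi>0$. Then the scheme $S_{1,\mathbf{w}^\lambda}$ preserves monotonicity: for every bounded non-decreasing initial sequence $\mathbf{f}^0$, the limit function $S^\infty_{1,\mathbf{w}^\lambda}\mathbf{f}^0$ is non-decreasing.
   Context: Put $w^\lambda_m=\phi(|m|/\lambda)$ for $m\in\mathbb{Z}$, $|m|<\lambda$, and $M_i=\{m\in\mathbb{Z}: m\equiv i \pmod 2,\ |m|<\lambda\}$, $i\in\{0,1\}$. The scheme $S_{1,\mathbf{w}^\lambda}$ (weighted local polynomial regression scheme of degree 1, coinciding with degree 0) is \[ (S_{1,\mathbf{w}^\lambda}\mathbf{f})_{2j+i}=\frac{\sum_{m\in M_i} w^\lambda_m f_{j+(m+i)/2}}{\sum_{m\in M_i} w^\lambda_m},\qquad i\in\{0,1\},\ j\in\mathbb{Z}. \] It is uniformly convergent; $S^\infty\mathbf{f}^0$ denotes the continuous limit $F$ with $\lim_{k\to\infty}\sup_j|(S^k\mathbf{f}^0)_j-F(2^{-k}j)|=0$. *)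

From Stdlib Require Import Reals Lra Lia ZArith List.
Open Scope R_scope.

Definition weight (phi : R -> R) (lam : R) (m : Z) : R :=
  phi (Rabs (IZR m) / lam).

(* Candidate integers -N..N with N = |up lam| > lam, so every |m| < lam is listed. *)
Definition candidates (lam : R) : list Z :=
  let N := Z.of_nat (Z.abs_nat (up lam)) in
  map (fun k => (Z.of_nat k - N)%Z) (seq 0 (2 * Z.abs_nat (up lam) + 1)).

Definition Mset (lam : R) (i : Z) : list Z :=
  filter (fun m => (Z.eqb (Z.modulo m 2) i &&
                    (if Rlt_dec (Rabs (IZR m)) lam then true else false))%bool)
         (candidates lam).

Definition sumZ (l : list Z) (g : Z -> R) : R :=
  fold_right (fun m acc => g m + acc) 0 l.

Definition S1w (phi : R -> R) (lam : R) (f : Z -> R) (n : Z) : R :=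
  let j := Z.div n 2 in
  let i := Z.modulo n 2 in
  sumZ (Mset lam i) (fun m => weight phi lam m * f (j + Z.div (m + i) 2)%Z)
  / sumZ (Mset lam i) (weight phi lam).

Definition S1w_iter (phi : R -> R) (lam : R) (k : nat) (f : Z -> R) : Z -> R :=
  Nat.iter k (S1w phi lam) f.

Definition is_limit_function (phi : R -> R) (lam : R) (f : Z -> R) (F : R -> R) : Prop :=
  (forall x, continuity_pt F x) /\
  forall eps, 0 < eps -> exists K : nat, forall k : nat, (K <= k)%nat ->
    forall j : Z, Rabs (S1w_iter phi lam k f j - F (IZR j / 2 ^ k)) <= eps.

Definition admissible_phi (phi : R -> R) : Prop :=
  (forall x, phi x = 1) \/
  (forall x, phi x = 1 - x) \/
  (forall x, phi x = 1 - x ^ 2) \/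
  (forall x, phi x = (1 - x ^ 2) ^ 2) \/
  (forall x, phi x = (1 - x ^ 3) ^ 3) \/
  (forall x, phi x = (1 - x ^ 2) ^ 3) \/
  (exists xi, 0 < xi /\ forall x, phi x = exp (- xi * x)).

From Stdlib Require Import Reals ZArith Lra Lia List Permutation.
Open Scope R_scope.

(* Write [w] for the weight truncated to [|m| < lam].  Reindexing [m = 2t - c], the
   values of [S1w f] at [n] and at [n + 1] are means of the same numbers [f (j + t)],
   with weights [w (2t - c)] and [w (2t - c - 1)] respectively.  Every admissible
   [phi] satisfies [phi a * phi b <= phi c * phi e] whenever [(c, e)] is weakly
   submajorized by [(a, b)] (for [(1 - x^r)^k] because [x^r] preserves weak
   submajorization, for [exp (- xi x)] trivially), so [w] is log-concave and the ratio
   of the two weight families is nondecreasing in [t].  Chebyshev's sum inequality then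
   shows that the mean of a nondecreasing [f] can only grow from [n] to [n + 1]: every
   iterate of the scheme is nondecreasing, and so is the limit, by continuity along the
   dyadic grid points [floor (2^k x) / 2^k]. *)

Definition submajorized (c e a b : R) : Prop :=
  Rmax c e <= Rmax a b /\ c + e <= a + b.

Lemma abs_shift_submajorized x y d :
  0 <= d -> y + d <= x - d -> submajorized (Rabs (x - d)) (Rabs (y + d)) (Rabs x) (Rabs y).
Proof.
  intros Hd Hxy; split.
  - apply Rmax_lub; apply Rmax_Rle; unfold Rabs; repeat destruct Rcase_abs; lra.
  - unfold Rabs; repeat destruct Rcase_abs; lra.
Qed.

Lemma submajorized_div k c e a b :
  0 < k -> submajorized c e a b -> submajorized (c / k) (e / k) (a / k) (b / k).
Proof.
  intros Hk [Hmax Hsum]. unfold Rdiv. rewrite !(Rmult_comm _ (/ k)).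
  assert (Hinv : 0 <= / k) by (left; apply Rinv_0_lt_compat, Hk).
  split.
  - rewrite !RmaxRmult by exact Hinv. now apply Rmult_le_compat_l.
  - rewrite <- !Rmult_plus_distr_l. now apply Rmult_le_compat_l.
Qed.

Lemma pow_increment_le n s t u :
  0 <= s -> 0 <= t <= u -> (t + s) ^ n - t ^ n <= (u + s) ^ n - u ^ n.
Proof.
  intros Hs Htu; induction n as [|n IH]; simpl; [lra|].
  assert (t ^ n <= (t + s) ^ n) by (apply pow_incr; lra).
  assert (t ^ n <= u ^ n) by (apply pow_incr; lra).
  assert ((t + s) * ((t + s) ^ n - t ^ n) <= (u + s) * ((u + s) ^ n - u ^ n))
    by (apply Rmult_le_compat; lra).
  nra.
Qed.

Lemma pow_sum_le_ordered n a b c e :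
  0 <= e <= c -> c <= a -> 0 <= b <= a -> c + e <= a + b -> c ^ n + e ^ n <= a ^ n + b ^ n.
Proof.
  intros He Hca Hb Hsum.
  destruct (Rle_lt_dec c b) as [Hcb|Hbc].
  - assert (c ^ n <= b ^ n) by (apply pow_incr; lra).
    assert (e ^ n <= a ^ n) by (apply pow_incr; lra).
    lra.
  - (* [c = b + s] and [e <= a - s] with [s = c - b]: compare increments of [t ^ n]. *)
    assert (H := pow_increment_le n (c - b) b (a - (c - b)) ltac:(lra) ltac:(lra)).
    replace (b + (c - b)) with c in H by ring.
    replace (a - (c - b) + (c - b)) with a in H by ring.
    assert (e ^ n <= (a - (c - b)) ^ n) by (apply pow_incr; lra).
    lra.
Qed.

Lemma pow_submajorized n c e a b :
  0 <= c -> 0 <= e -> 0 <= a -> 0 <= b -> submajorized c e a b ->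
  submajorized (c ^ n) (e ^ n) (a ^ n) (b ^ n).
Proof.
  intros Hc He Ha Hb [Hmax Hsum].
  assert (Hpow : forall p, 0 <= p -> p <= Rmax a b -> p ^ n <= Rmax (a ^ n) (b ^ n)).
  { intros p Hp Hpab; destruct (Rle_dec a b).
    - rewrite Rmax_right in Hpab by lra.
      apply Rle_trans with (b ^ n); [apply pow_incr; lra | apply Rmax_r].
    - rewrite Rmax_left in Hpab by lra.
      apply Rle_trans with (a ^ n); [apply pow_incr; lra | apply Rmax_l]. }
  assert (Hc' := Rle_trans _ _ _ (Rmax_l c e) Hmax).
  assert (He' := Rle_trans _ _ _ (Rmax_r c e) Hmax).
  split; [apply Rmax_lub; auto|].
  destruct (Rle_dec e c), (Rle_dec b a).
  - rewrite Rmax_left in Hc' by lra. apply pow_sum_le_ordered; lra.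
  - rewrite Rmax_right in Hc' by lra. rewrite (Rplus_comm (a ^ n)).
    apply pow_sum_le_ordered; lra.
  - rewrite Rmax_left in He' by lra. rewrite (Rplus_comm (c ^ n)).
    apply pow_sum_le_ordered; lra.
  - rewrite Rmax_right in He' by lra. rewrite (Rplus_comm (c ^ n)), (Rplus_comm (a ^ n)).
    apply pow_sum_le_ordered; lra.
Qed.

Lemma one_minus_prod_submajorized c e a b :
  0 <= c -> 0 <= e -> 0 <= a <= 1 -> 0 <= b <= 1 -> submajorized c e a b ->
  (1 - a) * (1 - b) <= (1 - c) * (1 - e).
Proof.
  intros Hc He Ha Hb [Hmax Hsum].
  assert (Hc' := Rle_trans _ _ _ (Rmax_l c e) Hmax).
  assert (He' := Rle_trans _ _ _ (Rmax_r c e) Hmax).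
  destruct (Rle_dec b a).
  - rewrite Rmax_left in Hc', He' by lra. nra.
  - rewrite Rmax_right in Hc', He' by lra. nra.
Qed.

Definition profile_pos (phi : R -> R) : Prop :=
  forall u, 0 <= u < 1 -> 0 < phi u.

Definition profile_submaj_antitone (phi : R -> R) : Prop :=
  forall c e a b, 0 <= c -> 0 <= e -> 0 <= a < 1 -> 0 <= b < 1 ->
  submajorized c e a b -> phi a * phi b <= phi c * phi e.

Lemma admissible_phi_cases phi : admissible_phi phi ->
  (exists r k, (1 <= r)%nat /\ forall x, phi x = (1 - x ^ r) ^ k) \/
  (exists xi, 0 < xi /\ forall x, phi x = exp (- xi * x)).
Proof.
  intros [E|[E|[E|[E|[E|[E|E]]]]]]; [left..|right; exact E].
  - exists 1%nat, 0%nat; split; [lia|]; intro x; rewrite E; ring.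
  - exists 1%nat, 1%nat; split; [lia|]; intro x; rewrite E; ring.
  - exists 2%nat, 1%nat; split; [lia|]; intro x; rewrite E; ring.
  - exists 2%nat, 2%nat; split; [lia|]; exact E.
  - exists 3%nat, 3%nat; split; [lia|]; exact E.
  - exists 2%nat, 3%nat; split; [lia|]; exact E.
Qed.

Lemma one_minus_pow_pow_pos r k u :
  (1 <= r)%nat -> 0 <= u < 1 -> 0 < (1 - u ^ r) ^ k.
Proof.
  intros Hr Hu. apply pow_lt.
  destruct (pow_lt_1_compat u r Hu ltac:(lia)). lra.
Qed.

Lemma one_minus_pow_pow_submaj_antitone r k :
  profile_submaj_antitone (fun x => (1 - x ^ r) ^ k).
Proof.
  intros c e a b Hc He Ha Hb Hsub.
  rewrite <- !Rpow_mult_distr. apply pow_incr.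
  assert (Hpow : forall u, 0 <= u <= 1 -> 0 <= u ^ r <= 1)
    by (intros u Hu; split; [apply pow_le | rewrite <- (pow1 r); apply pow_incr]; lra).
  assert (Ha' := Hpow a ltac:(lra)). assert (Hb' := Hpow b ltac:(lra)).
  split; [apply Rmult_le_pos; lra|].
  apply one_minus_prod_submajorized; [apply pow_le; lra | apply pow_le; lra | lra | lra |].
  apply pow_submajorized; [lra..|exact Hsub].
Qed.

Lemma exp_linear_submaj_antitone xi :
  0 < xi -> profile_submaj_antitone (fun x => exp (- xi * x)).
Proof.
  intros Hxi c e a b _ _ _ _ [_ Hsum].
  rewrite <- !exp_plus.
  destruct (Rle_lt_or_eq_dec (- xi * a + - xi * b) (- xi * c + - xi * e)) as [Hlt|Heq].
  - nra.
  - left; now apply exp_increasing.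
  - now rewrite Heq; right.
Qed.

Lemma admissible_phi_pos phi : admissible_phi phi -> profile_pos phi.
Proof.
  intros Hphi u Hu.
  destruct (admissible_phi_cases phi Hphi) as [(r & k & Hr & E)|(xi & _ & E)]; rewrite E.
  - now apply one_minus_pow_pow_pos.
  - apply exp_pos.
Qed.

Lemma admissible_phi_submaj_antitone phi :
  admissible_phi phi -> profile_submaj_antitone phi.
Proof.
  intros Hphi c e a b.
  destruct (admissible_phi_cases phi Hphi) as [(r & k & _ & E)|(xi & Hxi & E)]; rewrite !E.
  - apply one_minus_pow_pow_submaj_antitone.
  - now apply exp_linear_submaj_antitone.
Qed.

Lemma sumZ_ext l g h : (forall x, In x l -> g x = h x) -> sumZ l g = sumZ l h.
Proof.
  induction l as [|a l IH]; intros E; simpl; [reflexivity|].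
  f_equal; [apply E | apply IH; intros x Hx; apply E]; simpl; auto.
Qed.

Lemma sumZ_le l g h : (forall x, In x l -> g x <= h x) -> sumZ l g <= sumZ l h.
Proof.
  induction l as [|a l IH]; intros E; simpl; [lra|].
  apply Rplus_le_compat; [apply E | apply IH; intros x Hx; apply E]; simpl; auto.
Qed.

Lemma sumZ_const0 l : sumZ l (fun _ => 0) = 0.
Proof. induction l as [|a l IH]; simpl; [|rewrite IH]; ring. Qed.

Lemma sumZ_nonpos l g : (forall x, In x l -> g x <= 0) -> sumZ l g <= 0.
Proof. intros H. rewrite <- (sumZ_const0 l). now apply sumZ_le. Qed.

Lemma sumZ_nonneg l g : (forall x, In x l -> 0 <= g x) -> 0 <= sumZ l g.
Proof. intros H. rewrite <- (sumZ_const0 l). now apply sumZ_le. Qed.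

Lemma sumZ_ge_term l g x :
  (forall y, In y l -> 0 <= g y) -> In x l -> g x <= sumZ l g.
Proof.
  induction l as [|a l IH]; intros Hg Hx; [destruct Hx|]; simpl.
  assert (Hg' : forall y, In y l -> 0 <= g y) by (intros y Hy; apply Hg; simpl; auto).
  destruct Hx as [<-|Hx].
  - assert (0 <= sumZ l g) by now apply sumZ_nonneg. lra.
  - assert (0 <= g a) by (apply Hg; simpl; auto).
    assert (g x <= sumZ l g) by now apply IH. lra.
Qed.

Lemma sumZ_plus l g h : sumZ l (fun x => g x + h x) = sumZ l g + sumZ l h.
Proof. induction l as [|a l IH]; simpl; [|rewrite IH]; ring. Qed.

Lemma sumZ_lincomb l a b g h :
  sumZ l (fun x => a * g x - b * h x) = a * sumZ l g - b * sumZ l h.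
Proof. induction l as [|y l IH]; simpl; [|rewrite IH]; ring. Qed.

Lemma sumZ_comm l1 l2 (g : Z -> Z -> R) :
  sumZ l1 (fun x => sumZ l2 (fun y => g x y)) = sumZ l2 (fun y => sumZ l1 (fun x => g x y)).
Proof.
  induction l1 as [|a l1 IH]; simpl.
  - now rewrite sumZ_const0.
  - now rewrite IH, <- sumZ_plus.
Qed.

Lemma sumZ_map l h g : sumZ (map h l) g = sumZ l (fun t => g (h t)).
Proof. induction l as [|a l IH]; simpl; [|rewrite IH]; reflexivity. Qed.

Lemma sumZ_filter l g p :
  sumZ (filter p l) g = sumZ l (fun x => if p x then g x else 0).
Proof. induction l as [|a l IH]; simpl; [|destruct (p a); simpl; rewrite IH]; ring. Qed.

Lemma sumZ_perm l1 l2 g : Permutation l1 l2 -> sumZ l1 g = sumZ l2 g.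
Proof. induction 1; simpl; lra. Qed.

Lemma sumZ_same_support l1 l2 g : NoDup l1 -> NoDup l2 ->
  (forall x, g x <> 0 -> (In x l1 <-> In x l2)) -> sumZ l1 g = sumZ l2 g.
Proof.
  intros H1 H2 Hsupp.
  set (p x := if Req_dec_T (g x) 0 then false else true).
  assert (Hp : forall l, sumZ l g = sumZ (filter p l) g).
  { intro l. rewrite sumZ_filter. apply sumZ_ext. intros x _. unfold p.
    destruct Req_dec_T; auto. }
  rewrite (Hp l1), (Hp l2). apply sumZ_perm, NoDup_Permutation; try now apply NoDup_filter.
  intro x. rewrite !filter_In. unfold p. destruct Req_dec_T as [_|Hx].
  - split; intros [_ F]; discriminate.
  - specialize (Hsupp x Hx). tauto.
Qed.

Lemma sumZ_cross_le l (rho sig f : Z -> R) :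
  (forall t t', (t' < t)%Z -> rho t * sig t' <= sig t * rho t') ->
  (forall t t', (t' <= t)%Z -> f t' <= f t) ->
  sumZ l (fun t => rho t * f t) * sumZ l sig <= sumZ l (fun t => sig t * f t) * sumZ l rho.
Proof.
  intros Hratio Hf.
  set (P t t' := f t * (rho t * sig t' - sig t * rho t')).
  (* Chebyshev: [(f t - f t') (rho t sig t' - sig t rho t') = P t t' + P t' t <= 0]. *)
  assert (Hneg : sumZ l (fun t => sumZ l (fun t' => P t t' + P t' t)) <= 0).
  { apply sumZ_nonpos; intros t _; apply sumZ_nonpos; intros t' _. unfold P.
    destruct (Z.lt_trichotomy t' t) as [Hlt|[->|Hgt]].
    - specialize (Hratio t t' Hlt); specialize (Hf t t' (Z.lt_le_incl _ _ Hlt)); nra.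
    - lra.
    - specialize (Hratio t' t Hgt); specialize (Hf t' t (Z.lt_le_incl _ _ Hgt)); nra. }
  assert (Hrow : forall t, sumZ l (fun t' => P t t') =
                           (rho t * f t) * sumZ l sig - (sig t * f t) * sumZ l rho).
  { intro t. unfold P. rewrite <- sumZ_lincomb. apply sumZ_ext; intros; ring. }
  rewrite (sumZ_ext _ _ (fun t => sumZ l (fun t' => P t t') + sumZ l (fun t' => P t' t)))
    in Hneg by (intros; apply sumZ_plus).
  rewrite sumZ_plus, (sumZ_comm l l (fun t' t => P t t')) in Hneg.
  rewrite (sumZ_ext _ _ _ (fun t _ => Hrow t)) in Hneg.
  rewrite (sumZ_ext _ _ (fun t => sumZ l sig * (rho t * f t) - sumZ l rho * (sig t * f t)))
    in Hneg by (intros; ring).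
  rewrite sumZ_lincomb in Hneg. lra.
Qed.

Lemma weighted_mean_le l (rho sig f : Z -> R) :
  0 < sumZ l rho -> 0 < sumZ l sig ->
  (forall t t', (t' < t)%Z -> rho t * sig t' <= sig t * rho t') ->
  (forall t t', (t' <= t)%Z -> f t' <= f t) ->
  sumZ l (fun t => rho t * f t) / sumZ l rho <= sumZ l (fun t => sig t * f t) / sumZ l sig.
Proof.
  intros Hrho Hsig Hratio Hf.
  assert (H := sumZ_cross_le l rho sig f Hratio Hf).
  apply (Rmult_le_reg_r (sumZ l rho * sumZ l sig)); [nra|].
  replace (sumZ l (fun t => rho t * f t) / sumZ l rho * (sumZ l rho * sumZ l sig))
    with (sumZ l (fun t => rho t * f t) * sumZ l sig) by (field; lra).
  replace (sumZ l (fun t => sig t * f t) / sumZ l sig * (sumZ l rho * sumZ l sig))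
    with (sumZ l (fun t => sig t * f t) * sumZ l rho) by (field; lra).
  exact H.
Qed.

Lemma up_pos_bound lam : 1 < lam -> (2 <= up lam)%Z.
Proof.
  intros Hl. destruct (archimed lam) as [H _].
  assert (1 < up lam)%Z by (apply lt_IZR; lra). lia.
Qed.

Lemma abs_lt_up lam m : Rabs (IZR m) < lam -> (Z.abs m < up lam)%Z.
Proof. intros Hm. destruct (archimed lam) as [H _]. apply lt_IZR. rewrite abs_IZR. lra. Qed.

Lemma In_candidates lam x : 1 < lam -> In x (candidates lam) <-> (Z.abs x <= up lam)%Z.
Proof.
  intros Hl. pose proof (up_pos_bound lam Hl).
  unfold candidates. rewrite in_map_iff. split.
  - intros [k [<- Hk]]. apply in_seq in Hk. lia.
  - intros Hx. exists (Z.to_nat (x + up lam)). rewrite in_seq. lia.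
Qed.

Lemma NoDup_candidates lam : NoDup (candidates lam).
Proof.
  apply FinFun.Injective_map_NoDup; [intros a b E; lia | apply seq_NoDup].
Qed.

Lemma In_Mset lam i m : 1 < lam ->
  In m (Mset lam i) <-> (m mod 2 = i)%Z /\ Rabs (IZR m) < lam.
Proof.
  intros Hl. unfold Mset. rewrite filter_In, In_candidates by exact Hl.
  destruct Rlt_dec as [Hm|Hm].
  - rewrite Bool.andb_true_r, Z.eqb_eq. pose proof (abs_lt_up lam m Hm). intuition lia.
  - rewrite Bool.andb_false_r. intuition discriminate.
Qed.

Definition nondecreasing (f : Z -> R) : Prop :=
  forall j1 j2 : Z, (j1 <= j2)%Z -> f j1 <= f j2.

Lemma nondecreasing_of_succ (f : Z -> R) :
  (forall n, f n <= f (n + 1)%Z) -> nondecreasing f.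
Proof.
  intros H j1 j2 Hj. replace j2 with (j1 + Z.of_nat (Z.to_nat (j2 - j1)))%Z by lia.
  induction (Z.to_nat (j2 - j1)) as [|k IH].
  - rewrite Z.add_0_r. lra.
  - rewrite Nat2Z.inj_succ, Z.add_succ_r. unfold Z.succ.
    specialize (H (j1 + Z.of_nat k)%Z). lra.
Qed.

Section Scheme.

Variables (phi : R -> R) (lam : R).
Hypothesis lam_gt1 : 1 < lam.
Hypothesis phi_pos : profile_pos phi.
Hypothesis phi_antitone : profile_submaj_antitone phi.

Definition trunc_weight (m : Z) : R :=
  if Rlt_dec (Rabs (IZR m)) lam then weight phi lam m else 0.

Lemma scaled_abs_unit m : Rabs (IZR m) < lam -> 0 <= Rabs (IZR m) / lam < 1.
Proof.
  intros Hm. assert (Hinv : 0 < / lam) by (apply Rinv_0_lt_compat; lra). split.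
  - apply Rmult_le_pos; [apply Rabs_pos | lra].
  - apply (Rmult_lt_reg_r lam); [lra|].
    unfold Rdiv. rewrite Rmult_assoc, Rinv_l, Rmult_1_r, Rmult_1_l by lra. exact Hm.
Qed.

Lemma trunc_weight_in m : Rabs (IZR m) < lam -> trunc_weight m = weight phi lam m.
Proof. intros Hm. unfold trunc_weight. now destruct Rlt_dec. Qed.

Lemma trunc_weight_out m : ~ Rabs (IZR m) < lam -> trunc_weight m = 0.
Proof. intros Hm. unfold trunc_weight. now destruct Rlt_dec. Qed.

Lemma trunc_weight_pos m : Rabs (IZR m) < lam -> 0 < trunc_weight m.
Proof. intros Hm. rewrite trunc_weight_in by exact Hm. now apply phi_pos, scaled_abs_unit. Qed.

Lemma trunc_weight_nonneg m : 0 <= trunc_weight m.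
Proof.
  destruct (Rlt_dec (Rabs (IZR m)) lam) as [Hm|Hm].
  - left. now apply trunc_weight_pos.
  - rewrite trunc_weight_out by exact Hm. lra.
Qed.

Lemma trunc_weight_log_concave a b : (b + 1 <= a - 1)%Z ->
  trunc_weight a * trunc_weight b <= trunc_weight (a - 1) * trunc_weight (b + 1).
Proof.
  intros Hab.
  assert (Hab' : IZR b + 1 <= IZR a - 1)
    by (rewrite <- plus_IZR, <- minus_IZR; apply IZR_le; exact Hab).
  assert (Hrhs : 0 <= trunc_weight (a - 1) * trunc_weight (b + 1))
    by (apply Rmult_le_pos; apply trunc_weight_nonneg).
  destruct (Rlt_dec (Rabs (IZR a)) lam) as [Ha|Ha];
    [|rewrite (trunc_weight_out a Ha); lra].
  destruct (Rlt_dec (Rabs (IZR b)) lam) as [Hb|Hb];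
    [|rewrite (trunc_weight_out b Hb); lra].
  (* [a - 1] and [b + 1] lie between [b] and [a]. *)
  assert (Ha1 : Rabs (IZR (a - 1)) < lam)
    by (rewrite minus_IZR; unfold Rabs in *; repeat destruct Rcase_abs; lra).
  assert (Hb1 : Rabs (IZR (b + 1)) < lam)
    by (rewrite plus_IZR; unfold Rabs in *; repeat destruct Rcase_abs; lra).
  rewrite !trunc_weight_in by assumption. unfold weight.
  apply phi_antitone;
    [exact (proj1 (scaled_abs_unit _ Ha1)) | exact (proj1 (scaled_abs_unit _ Hb1))
    | now apply scaled_abs_unit | now apply scaled_abs_unit |].
  rewrite minus_IZR, plus_IZR. apply submajorized_div; [lra|].
  apply abs_shift_submajorized; lra.
Qed.

Lemma sum_Mset_reindex i c (g : Z -> R) : (0 <= c <= 2)%Z -> (c mod 2 = i)%Z ->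
  sumZ (Mset lam i) (fun m => weight phi lam m * g m) =
  sumZ (candidates lam) (fun t => trunc_weight (2 * t - c) * g (2 * t - c)%Z).
Proof.
  intros Hc Hi.
  rewrite (sumZ_ext _ _ (fun m => trunc_weight m * g m)).
  2:{ intros m Hm. apply In_Mset in Hm as [_ Hm]; [|exact lam_gt1].
      now rewrite trunc_weight_in. }
  rewrite <- (sumZ_map _ (fun t => 2 * t - c)%Z (fun m => trunc_weight m * g m)).
  apply sumZ_same_support.
  - apply NoDup_filter, NoDup_candidates.
  - apply FinFun.Injective_map_NoDup; [intros t t' E; lia | apply NoDup_candidates].
  - intros m Hm.
    assert (Hlt : Rabs (IZR m) < lam).
    { destruct (Rlt_dec (Rabs (IZR m)) lam) as [|Hout]; [assumption|].
      rewrite trunc_weight_out, Rmult_0_l in Hm by exact Hout. now destruct Hm. }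
    pose proof (abs_lt_up lam m Hlt). pose proof (up_pos_bound lam lam_gt1).
    rewrite In_Mset, in_map_iff by exact lam_gt1. split.
    + intros [Hmod _]. exists ((m + c) / 2)%Z. rewrite In_candidates by exact lam_gt1.
      Z.div_mod_to_equations; lia.
    + intros [t [<- _]]. split; [Z.div_mod_to_equations; lia | exact Hlt].
Qed.

Lemma S1w_reindex f n c : (0 <= c <= 2)%Z -> (c mod 2 = n mod 2)%Z ->
  S1w phi lam f n =
  sumZ (candidates lam) (fun t => trunc_weight (2 * t - c) * f ((n - c) / 2 + t)%Z)
  / sumZ (candidates lam) (fun t => trunc_weight (2 * t - c)).
Proof.
  intros Hc Hn. unfold S1w.
  rewrite (sumZ_ext (Mset lam _) (weight phi lam) (fun m => weight phi lam m * 1))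
    by (intros; ring).
  rewrite !(sum_Mset_reindex (n mod 2) c) by assumption.
  f_equal; apply sumZ_ext; intros t _; [|ring].
  do 2 f_equal. Z.div_mod_to_equations; lia.
Qed.

Lemma sum_trunc_weight_pos c : (0 <= c <= 2)%Z ->
  0 < sumZ (candidates lam) (fun t => trunc_weight (2 * t - c)).
Proof.
  intros Hc. set (t0 := ((c + 1) / 2)%Z).
  assert (Ht0 : (2 * t0 - c = 0 \/ 2 * t0 - c = 1)%Z) by (unfold t0; Z.div_mod_to_equations; lia).
  apply Rlt_le_trans with (trunc_weight (2 * t0 - c)).
  - apply trunc_weight_pos. destruct Ht0 as [-> | ->]; rewrite ?Rabs_R0, ?Rabs_R1; lra.
  - apply (sumZ_ge_term _ (fun t => trunc_weight (2 * t - c))).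
    + intros; apply trunc_weight_nonneg.
    + pose proof (up_pos_bound lam lam_gt1). rewrite In_candidates by exact lam_gt1.
      unfold t0; Z.div_mod_to_equations; lia.
Qed.

Lemma S1w_nondecreasing f : nondecreasing f -> nondecreasing (S1w phi lam f).
Proof.
  intros Hf. apply nondecreasing_of_succ. intro n.
  set (c := (n mod 2)%Z).
  assert (Hc : (0 <= c <= 1)%Z) by (unfold c; Z.div_mod_to_equations; lia).
  rewrite (S1w_reindex f n c), (S1w_reindex f (n + 1) (c + 1))
    by (unfold c; Z.div_mod_to_equations; lia).
  replace ((n + 1 - (c + 1)) / 2)%Z with ((n - c) / 2)%Z by (f_equal; lia).
  apply weighted_mean_le; try (apply sum_trunc_weight_pos; lia).
  - intros t t' Ht.
    replace (2 * t' - (c + 1))%Z with ((2 * t' - c) - 1)%Z by ring.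
    replace (2 * t - (c + 1))%Z with ((2 * t - c) - 1)%Z by ring.
    pose proof (trunc_weight_log_concave (2 * t - c) (2 * t' - c - 1) ltac:(lia)) as H.
    replace (2 * t' - c - 1 + 1)%Z with (2 * t' - c)%Z in H by ring.
    exact H.
  - intros t t' Ht. apply Hf. lia.
Qed.

Lemma S1w_iter_nondecreasing f k :
  nondecreasing f -> nondecreasing (S1w_iter phi lam k f).
Proof.
  intros Hf. induction k as [|k IH]; [exact Hf|].
  exact (S1w_nondecreasing _ IH).
Qed.

End Scheme.

Definition dyadic_floor (k : nat) (x : R) : Z := (up (x * 2 ^ k) - 1)%Z.

Lemma dyadic_floor_bounds k x :
  IZR (dyadic_floor k x) <= x * 2 ^ k < IZR (dyadic_floor k x) + 1.
Proof.
  unfold dyadic_floor. rewrite minus_IZR. destruct (archimed (x * 2 ^ k)). lra.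
Qed.

Lemma dyadic_floor_le k x y : x <= y -> (dyadic_floor k x <= dyadic_floor k y)%Z.
Proof.
  intros Hxy.
  assert (x * 2 ^ k <= y * 2 ^ k) by (apply Rmult_le_compat_r; [apply pow_le|]; lra).
  destruct (dyadic_floor_bounds k x), (dyadic_floor_bounds k y).
  assert (Hlt : IZR (dyadic_floor k x) < IZR (dyadic_floor k y + 1)) by (rewrite plus_IZR; lra).
  apply lt_IZR in Hlt. lia.
Qed.

Lemma dyadic_floor_approx k x :
  0 <= x - IZR (dyadic_floor k x) / 2 ^ k < / 2 ^ k.
Proof.
  assert (Hpow : 0 < 2 ^ k) by (apply pow_lt; lra).
  assert (Hinv : 0 < / 2 ^ k) by (apply Rinv_0_lt_compat, Hpow).
  destruct (dyadic_floor_bounds k x).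
  replace (x - IZR (dyadic_floor k x) / 2 ^ k)
    with ((x * 2 ^ k - IZR (dyadic_floor k x)) * / 2 ^ k) by (field; lra).
  split; [apply Rmult_le_pos; lra|].
  rewrite <- (Rmult_1_l (/ 2 ^ k)) at 2. apply Rmult_lt_compat_r; lra.
Qed.

Lemma dyadic_floor_cv x : Un_cv (fun k => IZR (dyadic_floor k x) / 2 ^ k) x.
Proof.
  intros eps Heps.
  destruct (pow_lt_1_zero (/ 2) ltac:(rewrite Rabs_right; lra) eps Heps) as [N HN].
  exists N. intros k Hk. specialize (HN k Hk).
  rewrite pow_inv, Rabs_right in HN by (left; apply Rinv_0_lt_compat, pow_lt; lra).
  destruct (dyadic_floor_approx k x).
  unfold R_dist. rewrite Rabs_minus_sym, Rabs_right; lra.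
Qed.

Lemma Un_cv_const c : Un_cv (fun _ => c) c.
Proof.
  intros eps Heps. exists 0%nat. intros. unfold R_dist. rewrite Rminus_diag, Rabs_R0. exact Heps.
Qed.

Lemma grid_limit_nondecreasing (g : nat -> Z -> R) (F : R -> R) :
  (forall k, nondecreasing (g k)) ->
  (forall x, continuity_pt F x) ->
  (forall eps, 0 < eps -> exists K : nat, forall k : nat, (K <= k)%nat ->
     forall j : Z, Rabs (g k j - F (IZR j / 2 ^ k)) <= eps) ->
  forall x y, x <= y -> F x <= F y.
Proof.
  intros Hg HF Hlim x y Hxy.
  apply Rle_plus_epsilon. intros eps Heps.
  destruct (Hlim (eps / 2) ltac:(lra)) as [K HK].
  set (grid z k := IZR (dyadic_floor k z) / 2 ^ k).
  assert (Hcv : forall z, Un_cv (fun k => F (grid z (k + K)%nat)) (F z)).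
  { intro z. apply (CV_shift' (fun k => F (grid z k))), continuity_seq;
      [apply HF | apply dyadic_floor_cv]. }
  apply (Rle_cv_lim (Un := fun k => F (grid x (k + K)%nat))
                    (Vn := fun k => F (grid y (k + K)%nat) + eps)).
  - intro k. unfold grid.
    assert (Hk : (K <= k + K)%nat) by lia.
    pose proof (HK _ Hk (dyadic_floor (k + K) x)) as Hx.
    pose proof (HK _ Hk (dyadic_floor (k + K) y)) as Hy.
    pose proof (Hg (k + K)%nat _ _ (dyadic_floor_le (k + K) x y Hxy)).
    unfold Rabs in Hx, Hy; destruct Rcase_abs in Hx; destruct Rcase_abs in Hy; lra.
  - apply Hcv.
  - apply CV_plus; [apply Hcv | apply Un_cv_const].
Qed.

Theorem corollary4p7 (lam : R) (phi : R -> R) :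
  1 < lam -> (forall n : nat, INR n <> lam) ->
  admissible_phi phi ->
  forall (f0 : Z -> R),
    (exists B, forall j, Rabs (f0 j) <= B) ->
    (forall j1 j2 : Z, (j1 <= j2)%Z -> f0 j1 <= f0 j2) ->
    forall F : R -> R, is_limit_function phi lam f0 F ->
    forall x y : R, x <= y -> F x <= F y.
Proof.
  intros Hlam _ Hphi f0 _ Hf0 F [HF Hlim].
  apply (grid_limit_nondecreasing (fun k => S1w_iter phi lam k f0)); [|exact HF|exact Hlim].
  intro k. apply S1w_iter_nondecreasing; [exact Hlam | | | exact Hf0].
  - now apply admissible_phi_pos.
  - now apply admissible_phi_submaj_antitone.
Qed.
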